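(* Let $n>5$ be prime, $d\ge1$, and let $\gamma$ be a probability distribution on $\mathbb{Z}_n^d$ with $\gamma(k)\in\mathbb{Q}$ for all $k$. If the random walk on $\mathbb{Z}_n^d$ with step distribution $\gamma$ is reconstructive, then the Fourier coefficients $\{\hat{\gamma}(x)\}_{x\in\mathbb{Z}_n^d}$ are pairwise distinct.
   Context: The Fourier transform is $\hat{\gamma}(x)=\sum_{k\in\mathbb{Z}_n^d}\omega_n^{k\cdot x}\gamma(k)$, where $k\cdot x=\sum_{i=1}^d k_ix_i$ in $\mathbb{Z}_n$ and $\omega_n=e^{-2\pi i/n}$. The random walk has $v(1)$ uniform on $\mathbb{Z}_n^d$ and independent steps with $\mathbb{P}(v(t+1)-v(t)=k)=\gamma(k)$. It is reconstructive if, for any two labelings $f_1,f_2:\mathbb{Z}_n^d\to\{0,1\}$, the distributions of $\{f_1(v(t))\}_{t\ge1}$ and $\{f_2(v(t))\}_{t\ge1}$ coincide only if there is $\ell$ with $f_1(k)=f_2(k+\ell)$ for all $k$. *)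

From mathcomp Require Import all_boot all_order all_algebra.
From mathcomp Require Import reals trigo.
From mathcomp Require Import complex.
Import GRing.Theory Num.Theory.

Set Implicit Arguments.
Unset Strict Implicit.
Unset Printing Implicit Defensive.

Local Open Scope ring_scope.

(* The group Z_n^d is represented by row vectors 'rV['Z_n]_d
   (additive group structure = componentwise addition mod n; valid for n >= 2). *)
Notation Znd n d := 'rV['Z_n]_d.

Definition is_distribution (n d : nat) (gamma : Znd n d -> rat) : Prop :=
  (forall k, 0 <= gamma k) /\ \sum_(k : Znd n d) gamma k = 1.

(* Probability that the walk v(1), ..., v(T+1) follows the vertex sequence v :
   v(1) uniform on Z_n^d, independent steps v(t+1) - v(t) with law gamma. *)
Definition path_prob (n d : nat) (gamma : Znd n d -> rat) (T : nat)
  (v : {ffun 'I_T.+1 -> Znd n d}) : rat :=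
  (#|{: Znd n d}|%:R)^-1 *
  \prod_(t < T) gamma (v (inord t.+1) - v (inord t)).

(* P( f(v(1)) = w 1, ..., f(v(T+1)) = w (T+1) ) : finite-dimensional
   (cylinder) probabilities of the observed label process {f(v(t))}_{t>=1}. *)
Definition cyl_prob (n d : nat) (gamma : Znd n d -> rat) (f : Znd n d -> bool)
  (T : nat) (w : {ffun 'I_T.+1 -> bool}) : rat :=
  \sum_(v : {ffun 'I_T.+1 -> Znd n d} | [forall t, f (v t) == w t])
     path_prob gamma v.

(* Two labelings induce the same law of the observed sequence
   (laws on {0,1}^N agree iff all cylinder probabilities agree). *)
Definition same_law (n d : nat) (gamma : Znd n d -> rat)
  (f1 f2 : Znd n d -> bool) : Prop :=
  forall (T : nat) (w : {ffun 'I_T.+1 -> bool}),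
    cyl_prob gamma f1 w = cyl_prob gamma f2 w.

Definition reconstructive (n d : nat) (gamma : Znd n d -> rat) : Prop :=
  forall f1 f2 : Znd n d -> bool,
    same_law gamma f1 f2 -> exists l : Znd n d, forall k, f1 k = f2 (k + l).

Definition dotZ (n d : nat) (k x : Znd n d) : 'Z_n :=
  \sum_(i < d) k ord0 i * x ord0 i.

Definition omega (R : realType) (n : nat) : R[i] :=
  ((cos (2 * pi / n%:R)) -i* (sin (2 * pi / n%:R)))%C.

Definition fourier (R : realType) (n d : nat) (gamma : Znd n d -> rat)
  (x : Znd n d) : R[i] :=
  \sum_(k : Znd n d) omega R n ^+ (nat_of_ord (dotZ k x)) * ratr (gamma k).

(* Write the Fourier coefficient at x as sum_s omega^s gamma_x(s), where gamma_x
   is the law of k.x for k distributed by gamma. Over Q the only relation among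
   1, omega, ..., omega^(n-1) is 1 + omega + ... + omega^(n-1) = 0, because this
   polynomial is irreducible for n prime; as both laws have the same total mass,
   equal Fourier coefficients at x and y force gamma_x = gamma_y.
   The image k |-> k.x of the walk is a uniform-start random walk on Z_n with step
   law gamma_x, and every fibre of k |-> k.x has n^(d-1) points, so for any
   g : Z_n -> {0,1} the labelings g(k.x) and g(k.y) have the same law and, by
   reconstructivity, differ by a shift. With g the indicator of {0} this makes
   x and y collinear, y = a x, and with g the indicator of {0,1} (of {0,1,3} when
   a = -1) it forces a = 1. Finally gamma_0 = gamma_x would imply
   gamma_(2x) = gamma_x, so x = 0 is not an exception. *)

From mathcomp Require Import all_boot all_order all_algebra all_field.
From mathcomp Require Import reals trigo.
From mathcomp Require Import complex.
From mathcomp Require Import ring zify.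
Import Order.TTheory GRing.Theory Num.Theory.

Set Implicit Arguments.
Unset Strict Implicit.
Unset Printing Implicit Defensive.

Local Open Scope ring_scope.

Definition geometric_poly n : {poly rat} := \poly_(i < n) 1.

Lemma size_geometric_poly n : size (geometric_poly n) = n.
Proof. by case: n => [|n]; rewrite /geometric_poly ?size_poly0 // size_poly_eq ?oner_eq0. Qed.

Lemma sum_expr_root_of_unity (R : idomainType) n (w : R) :
  w ^+ n = 1 -> w != 1 -> \sum_(i < n) w ^+ i = 0.
Proof.
move=> wn w_neq1; have : (w - 1) * \sum_(i < n) w ^+ i = 0 by rewrite -subrX1 wn subrr.
by move/eqP; rewrite mulf_eq0 subr_eq0 (negbTE w_neq1) => /eqP.
Qed.

Lemma map_poly_poly (F : fieldType) (f : {rmorphism rat -> F}) n (E : nat -> rat) :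
  map_poly f (\poly_(i < n) E i) = \poly_(i < n) f (E i).
Proof. by apply/polyP => i; rewrite coef_map !coef_poly; case: ifP => _; rewrite ?raddf0. Qed.

Lemma root_geometric_poly (F : fieldType) (f : {rmorphism rat -> F}) n (w : F) :
  w ^+ n = 1 -> w != 1 -> root (map_poly f (geometric_poly n)) w.
Proof.
move=> wn w_neq1; rewrite /root map_poly_poly horner_poly.
under eq_bigr do rewrite rmorph1 mul1r.
by rewrite sum_expr_root_of_unity.
Qed.

Lemma geometric_poly_irreducible p : prime p -> irreducible_poly (geometric_poly p).
Proof.
move=> p_pr; have [z z_prim] := C_prim_root_exists (prime_gt0 p_pr).
have [m [Dm _] min_m] := minCpolyP z.
have root_z : root (map_poly ratr (geometric_poly p)) z.
  apply: root_geometric_poly; first exact: prim_expr_order.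
  by rewrite -[z]expr1 -(prim_order_dvd z_prim) dvdn1 gtn_eqF ?prime_gt1.
have size_m : size m = p.
  rewrite -(size_map_poly (ratr : rat -> algC)) -Dm (minCpoly_cyclotomic z_prim).
  rewrite size_cyclotomic.
  by rewrite totient_prime // prednK ?prime_gt0.
apply/(subfx_irreducibleP root_z).
  by rewrite -size_poly_eq0 size_geometric_poly -lt0n prime_gt0.
move=> q root_q q_neq0; rewrite size_geometric_poly -size_m dvdp_leq //.
by rewrite -min_m.
Qed.

Lemma coef_const_of_root_of_unity (F : fieldType) (f : {rmorphism rat -> F}) p (w : F)
    (c : 'I_p.+1 -> rat) :
  prime p.+1 -> w ^+ p.+1 = 1 -> w != 1 ->
  \sum_(i < p.+1) f (c i) * w ^+ i = 0 -> forall i, c i = c ord_max.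
Proof.
move=> p_pr wp w_neq1 sum0.
pose q := \poly_(j < p) (c (inord j) - c ord_max).
have root_q : root (map_poly f q) w.
  rewrite /root map_poly_poly horner_poly.
  have : \sum_(j < p.+1) (f (c j) - f (c ord_max)) * w ^+ j = 0.
    under eq_bigr do rewrite mulrBl.
    by rewrite sumrB sum0 -mulr_sumr sum_expr_root_of_unity // mulr0 subr0.
  rewrite big_ord_recr /= subrr mul0r addr0 => sum_eq0; apply/eqP; rewrite -[RHS]sum_eq0.
  by apply: eq_bigr => j _; rewrite raddfB (inord_val (widen_ord (leqnSn p) j)).
have q0 : q = 0.
  apply: contraTeq (size_poly p (fun j => c (inord j) - c ord_max)) => q_neq0.
  have root_geo := root_geometric_poly f wp w_neq1.
  have geo_neq0 : geometric_poly p.+1 != 0 by rewrite -size_poly_eq0 size_geometric_poly.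
  have := iffRL (subfx_irreducibleP root_geo geo_neq0) (geometric_poly_irreducible p_pr).
  by move/(_ q root_q q_neq0); rewrite size_geometric_poly -ltnNge.
move=> i; apply/eqP; rewrite -subr_eq0.
have [i_lt|i_ge] := ltnP i p.
  have := congr1 (fun r : {poly rat} => r`_i) q0.
  by rewrite coef_poly i_lt coef0 inord_val => ->.
by rewrite (_ : i = ord_max) ?subrr //; apply/val_inj/eqP; rewrite eqn_leq -ltnS ltn_ord.
Qed.

Lemma omega_expr (R : realType) n k :
  omega R n ^+ k = (cos (k%:R * (2 * pi / n%:R)) -i* sin (k%:R * (2 * pi / n%:R)))%C.
Proof.
elim: k => [|k IHk]; first by rewrite expr0 !mul0r cos0 sin0 oppr0.
rewrite exprSr IHk /omega; set t := 2 * pi / n%:R.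
rewrite -natr1 mulrDl mul1r cosD sinD.
by congr Complex; rewrite /= ?mulrNN; ring.
Qed.

Lemma omega_expr_n (R : realType) n : (0 < n)%N -> omega R n ^+ n = 1.
Proof.
move=> n_gt0; rewrite omega_expr mulrCA mulfV ?pnatr_eq0 -?lt0n // mulr1.
by rewrite mulr_natl cos2pi sin2pi oppr0.
Qed.

Lemma omega_neq1 (R : realType) n : (2 < n)%N -> omega R n != 1.
Proof.
move=> n_gt2; apply/negP => /eqP/(congr1 (@complex.Im R)) /= /eqP.
rewrite oppr_eq0 gt_eqF //; apply: sin_gt0_pi; apply/andP; split.
  by rewrite divr_gt0 ?mulr_gt0 ?pi_gt0 ?ltr0n // (ltn_trans _ n_gt2).
by rewrite ltr_pdivrMr ?ltr0n ?(ltn_trans _ n_gt2) // [pi * _]mulrC ltr_pM2r ?pi_gt0 ?ltr_nat.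
Qed.

Lemma Zp_unit n (z : 'Z_n) : prime n -> z != 0 -> z \is a GRing.unit.
Proof.
move=> n_pr z_neq0; have n_gt1 := prime_gt1 n_pr.
rewrite -(natr_Zp z) unitZpE // prime_coprime // gtnNdvd //.
  by rewrite lt0n; apply: contra z_neq0 => /eqP z0; apply/eqP/val_inj.
by rewrite -[X in (_ < X)%N](Zp_cast n_gt1) ltn_ord.
Qed.

Section DotProduct.
Variables (n d : nat).
Implicit Types (k l x y : 'rV['Z_n]_d) (c s : 'Z_n).

Lemma dotZDl k l x : dotZ (k + l) x = dotZ k x + dotZ l x.
Proof. by rewrite /dotZ -big_split; apply: eq_bigr => i _; rewrite mxE mulrDl. Qed.

Lemma dotZBl k l x : dotZ (k - l) x = dotZ k x - dotZ l x.
Proof. by rewrite /dotZ -sumrB; apply: eq_bigr => i _; rewrite !mxE mulrBl. Qed.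

Lemma dotZZl c k x : dotZ (c *: k) x = c * dotZ k x.
Proof. by rewrite /dotZ mulr_sumr; apply: eq_bigr => i _; rewrite mxE mulrA. Qed.

Lemma dotZZr c k x : dotZ k (c *: x) = c * dotZ k x.
Proof. by rewrite /dotZ mulr_sumr; apply: eq_bigr => i _; rewrite mxE mulrCA. Qed.

Lemma dotZ0l x : dotZ 0 x = 0.
Proof. by rewrite /dotZ big1 // => i _; rewrite mxE mul0r. Qed.

Lemma dotZ_deltal i x : dotZ (delta_mx 0 i) x = x 0 i.
Proof.
rewrite /dotZ (bigD1 i) //= big1 ?addr0 => [|j j_neq_i]; first by rewrite mxE !eqxx mul1r.
by rewrite mxE eqxx (negbTE j_neq_i) mul0r.
Qed.

Hypothesis n_prime : prime n.

Lemma dual_vector x : x != 0 -> exists e, dotZ e x = 1.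
Proof.
move=> x_neq0; have [i xi_neq0] : exists i, x 0 i != 0.
  apply/existsP; apply: contraR x_neq0; rewrite negb_exists => /forallP x_eq0.
  by apply/eqP/rowP => i; rewrite mxE; apply/eqP/negbNE.
exists ((x 0 i)^-1 *: delta_mx 0 i).
by rewrite dotZZl dotZ_deltal mulVr // Zp_unit.
Qed.

Lemma card_dotZ_fiber x s : x != 0 ->
  (#|'Z_n| * #|[pred k | dotZ k x == s]| = #|'rV['Z_n]_d|)%N.
Proof.
move=> x_neq0; have [e dot_e] := dual_vector x_neq0.
have fiber_shift t : #|[pred k | dotZ k x == t]| = #|[pred k | dotZ k x == s]|.
  rewrite -!sum1_card (reindex_inj (addIr ((t - s) *: e))) /=.
  apply: eq_bigl => k; rewrite !inE dotZDl dotZZl dot_e mulr1.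
  by rewrite (can2_eq (addrK _) (subrK _)) subKr.
rewrite -sum_nat_const -[RHS]sum1_card (partition_big (fun k => dotZ k x) xpredT) //=.
by apply: eq_bigr => t _; rewrite -(fiber_shift t) -sum1_card.
Qed.

Lemma collinear_of_kernel x y : x != 0 ->
  (forall k, dotZ k x = 0 -> dotZ k y = 0) -> exists a, y = a *: x.
Proof.
move=> x_neq0 ker_xy; have [e dot_e] := dual_vector x_neq0.
have dot_y k : dotZ k y = dotZ k x * dotZ e y.
  apply/eqP; rewrite -subr_eq0 -dotZZl -dotZBl; apply/eqP/ker_xy.
  by rewrite dotZBl dotZZl dot_e mulr1 subrr.
by exists (dotZ e y); apply/rowP => i; rewrite mxE -!dotZ_deltal dot_y mulrC.
Qed.

End DotProduct.

Section DotLaw.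
Variables (n d : nat) (gamma : 'rV['Z_n]_d -> rat).
Implicit Types (x y : 'rV['Z_n]_d) (c s : 'Z_n).

Definition dot_law x s : rat := \sum_(k | dotZ k x == s) gamma k.

Lemma sum_dot_law x : \sum_s dot_law x s = \sum_k gamma k.
Proof. by rewrite [RHS](partition_big (fun k => dotZ k x) xpredT). Qed.

Lemma dot_lawZ c x s : dot_law (c *: x) s = \sum_(t | c * t == s) dot_law x t.
Proof.
rewrite /dot_law (partition_big (fun k => dotZ k x) (fun t => c * t == s)) => [|k];
  last by rewrite dotZZr.
apply: eq_bigr => t /eqP ct_s; apply: eq_bigl => k.
apply/idP/idP => [/andP[] //|k_t].
by rewrite dotZZr (eqP k_t) ct_s !eqxx.
Qed.

Lemma fourier_dot_law (R : realType) x :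
  fourier R gamma x = \sum_(s : 'Z_n) omega R n ^+ s * ratr (dot_law x s).
Proof.
rewrite /fourier (partition_big (fun k => dotZ k x) xpredT) //=.
apply: eq_bigr => s _; rewrite rmorph_sum mulr_sumr.
by apply: eq_bigr => k /eqP ->.
Qed.

Lemma fourier_inj_dot_law (R : realType) x y : prime n -> (2 < n)%N ->
  fourier R gamma x = fourier R gamma y -> dot_law x =1 dot_law y.
Proof.
move=> n_pr n_gt2 eq_fourier.
pose c s := dot_law x s - dot_law y s.
have n_eq : (Zp_trunc n).+2 = n by rewrite Zp_cast // prime_gt1.
have c_const : forall s, c s = c ord_max.
  apply: (coef_const_of_root_of_unity (f := ratr) (w := omega R n)).
  - by rewrite n_eq.
  - by rewrite n_eq omega_expr_n // (ltn_trans _ n_gt2).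
  - exact: omega_neq1.
  have : fourier R gamma x - fourier R gamma y = 0 by rewrite eq_fourier subrr.
  rewrite !fourier_dot_law -sumrB => diff0; rewrite -[RHS]diff0.
  by apply: eq_bigr => s _; rewrite raddfB mulrBl !(mulrC _ (omega R n ^+ s)).
have c_max0 : c ord_max = 0.
  have : \sum_s c s = 0 by rewrite sumrB !sum_dot_law subrr.
  rewrite (eq_bigr _ (fun s _ => c_const s)) sumr_const card_ord -mulr_natr.
  by move/eqP; rewrite mulf_eq0 pnatr_eq0 orbF => /eqP.
by move=> s; apply/eqP; rewrite -subr_eq0 -/(c s) c_const c_max0.
Qed.

End DotLaw.

Lemma prodr_if0 (R : comPzSemiRingType) (I : finType) (P : pred I) (F : I -> R) :
  \prod_i (if P i then F i else 0) = if [forall i, P i] then \prod_i F i else 0.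
Proof.
case: ifP => [/forallP P_all | /negbT]; first by apply: eq_bigr => i _; rewrite P_all.
by rewrite negb_forall => /existsP [i /negbTE Pi_false]; rewrite (bigD1 i) //= Pi_false mul0r.
Qed.

Section Increments.
Variables (G : zmodType) (T : nat).

Definition increments (v : {ffun 'I_T.+1 -> G}) : {ffun 'I_T -> G} :=
  [ffun t : 'I_T => v (inord t.+1) - v (inord t)].

Lemma eq_from_increments (v w : {ffun 'I_T.+1 -> G}) :
  v (inord 0) = w (inord 0) -> increments v = increments w -> v = w.
Proof.
move=> eq0 eq_incr; apply/ffunP => t; rewrite -(inord_val t).
elim: (val t) (ltn_ord t) => [//|k IHk] k_lt.
have := congr1 (fun u : {ffun 'I_T -> G} => u (Ordinal (k_lt : (k < T)%N))) eq_incr.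
by rewrite !ffunE /= (IHk (ltnW k_lt)) => /addIr.
Qed.

End Increments.

Section PathImage.
Variables (V G : finZmodType) (phi : V -> G).
Hypothesis phiB : {morph phi : a b / a - b}.
Variables (R : comPzSemiRingType) (gamma : V -> R) (T : nat).

Lemma image_path_eq (v : {ffun 'I_T.+1 -> V}) (s : {ffun 'I_T.+1 -> G}) :
  [forall t, phi (v t) == s t] =
  (phi (v (inord 0)) == s (inord 0)) &&
  [forall t, phi (increments v t) == increments s t].
Proof.
transitivity ([ffun t => phi (v t)] == s).
  apply/forallP/eqP => [v_s|<- t]; last by rewrite ffunE.
  by apply/ffunP => t; rewrite ffunE (eqP (v_s t)).
apply/eqP/andP => [<-|[/eqP v_s0 /forallP v_s_incr]].
  by rewrite ffunE; split=> //; apply/forallP => t; rewrite !ffunE phiB.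
apply: eq_from_increments; first by rewrite ffunE.
by apply/ffunP => t; move/eqP: (v_s_incr t); rewrite !ffunE phiB.
Qed.

Lemma sum_path_image (s : {ffun 'I_T.+1 -> G}) :
  \sum_(v : {ffun 'I_T.+1 -> V} | [forall t, phi (v t) == s t])
     \prod_(t < T) gamma (increments v t)
  = #|[pred a | phi a == s (inord 0)]|%:R *
    \prod_(t < T) \sum_(u | phi u == increments s t) gamma u.
Proof.
pose split (v : {ffun 'I_T.+1 -> V}) := (v (inord 0), increments v).
have [join splitK joinK] : bijective split.
  apply: inj_card_bij => [v w [eq0 eq_incr]|]; first exact: eq_from_increments.
  by rewrite card_prod !card_ffun !card_ord expnS.
have join0 p : join p (inord 0) = p.1 by rewrite -[in RHS](joinK p).
have join_incr p : increments (join p) = p.2 by rewrite -[in RHS](joinK p).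
rewrite (reindex join) /=; last by apply: onW_bij; exists split.
under eq_bigl do rewrite image_path_eq join0 join_incr.
under eq_bigr do rewrite join_incr.
rewrite -(pair_big (fun a => phi a == s (inord 0))
  (fun u : {ffun 'I_T -> V} => [forall t, phi (u t) == increments s t])
  (fun _ u => \prod_t gamma (u t))) /=.
rewrite sumr_const mulr_natl; congr (_ *+ _).
under [RHS]eq_bigr do rewrite big_mkcond.
by rewrite bigA_distr_bigA /= big_mkcond; apply: eq_bigr => u _; rewrite prodr_if0.
Qed.

End PathImage.

Lemma path_probE n d (gamma : 'rV['Z_n]_d -> rat) T (v : {ffun 'I_T.+1 -> 'rV['Z_n]_d}) :
  path_prob gamma v = (#|{: 'rV['Z_n]_d}|%:R)^-1 * \prod_(t < T) gamma (increments v t).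
Proof. by congr (_ * _); apply: eq_bigr => t _; rewrite ffunE. Qed.

Lemma cyl_prob_dot n d (gamma : 'rV['Z_n]_d -> rat) (g : 'Z_n -> bool) x T
    (w : {ffun 'I_T.+1 -> bool}) :
  cyl_prob gamma (fun k => g (dotZ k x)) w =
  \sum_(s : {ffun 'I_T.+1 -> 'Z_n} | [forall t, g (s t) == w t])
    (#|{: 'rV['Z_n]_d}|%:R)^-1 * (#|[pred k | dotZ k x == s (inord 0)]|%:R *
       \prod_(t < T) dot_law gamma x (increments s t)).
Proof.
rewrite /cyl_prob (partition_big
  (fun v : {ffun 'I_T.+1 -> 'rV['Z_n]_d} => [ffun t => dotZ (v t) x])
  (fun s => [forall t, g (s t) == w t])) => [|v /forallP v_w]; last first.
  by apply/forallP => t; rewrite ffunE.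
apply: eq_bigr => s /forallP s_w.
rewrite (eq_bigl (fun v : {ffun 'I_T.+1 -> 'rV['Z_n]_d} =>
  [forall t, dotZ (v t) x == s t])) => [|v].
  under eq_bigr do rewrite path_probE.
  by rewrite -mulr_sumr (sum_path_image (fun k l => dotZBl k l x)).
apply/andP/forallP => [[_ /eqP <- t]|v_s]; first by rewrite ffunE.
split; first by apply/forallP => t; rewrite (eqP (v_s t)).
by apply/eqP/ffunP => t; rewrite ffunE (eqP (v_s t)).
Qed.

Lemma same_law_dot n d (gamma : 'rV['Z_n]_d -> rat) (g : 'Z_n -> bool) x y :
  prime n -> x != 0 -> y != 0 -> dot_law gamma x =1 dot_law gamma y ->
  same_law gamma (fun k => g (dotZ k x)) (fun k => g (dotZ k y)).
Proof.
move=> n_pr x_neq0 y_neq0 eq_law T w; rewrite !cyl_prob_dot.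
apply: eq_bigr => s _; congr (_ * (_%:R * _)).
  by apply/eqP; rewrite -(@eqn_pmul2l #|'Z_n|) ?card_dotZ_fiber ?card_ord.
by apply: eq_bigr => t _; rewrite eq_law.
Qed.

Definition mem01 (R : pzRingType) (s : R) := (s == 0) || (s == 1).

Lemma affine_mem01 (R : pzRingType) (a c : R) : a != 0 -> a != -1 ->
  (forall s, mem01 (a * s + c) = mem01 s) -> a = 1.
Proof.
move=> a_neq0 a_neqN1 inv.
have /orP[/eqP c0|/eqP c1] : mem01 c by rewrite -[c]add0r -(mulr0 a) inv /mem01 eqxx.
  have := inv 1; rewrite mulr1 c0 addr0 {2}/mem01 eqxx orbT.
  by case/orP => /eqP // a0; rewrite a0 eqxx in a_neq0.
have := inv 1; rewrite mulr1 c1 {2}/mem01 eqxx orbT => /orP[] /eqP a_c.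
  by move: a_neqN1; rewrite -addr_eq0 a_c eqxx.
by move: a_neq0; rewrite -(addrK 1 a) a_c subrr eqxx.
Qed.

Section SmallResidues.
Variable n : nat.
Hypothesis n_gt5 : (5 < n)%N.

Lemma Zp_eqF (u v : 'Z_n) k : (0 < k < n)%N -> v - u = k%:R -> (u == v) = false.
Proof.
move=> /andP[k_gt0 k_lt] v_u; apply/negbTE; apply: contraTneq k_gt0 => u_v.
move: v_u; rewrite u_v subrr => /(congr1 val); rewrite /= val_Zp_nat ?modn_small //.
  by move=> <-.
exact: ltn_trans n_gt5.
Qed.

Definition mem013 (s : 'Z_n) := [|| s == 0, s == 1 | s == 3].

Lemma reflection_mem013 (c : 'Z_n) : ~ (forall s, mem013 (c - s) = mem013 s).
Proof.
move=> inv; have : mem013 c by rewrite -[c]subr0 inv /mem013 eqxx.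
case/or3P => /eqP c_val; rewrite {c}c_val in inv.
- have := inv 1; rewrite /mem013 eqxx orbT.
  rewrite (@Zp_eqF _ 0 1) ?(@Zp_eqF _ 1 2) ?(@Zp_eqF _ 3 4) //; try lia; ring.
- have := inv 3; rewrite /mem013 eqxx !orbT.
  rewrite (@Zp_eqF _ 0 2) ?(@Zp_eqF _ 1 3) ?(@Zp_eqF _ 3 5) //; try lia; ring.
- have := inv 1; rewrite /mem013 eqxx orbT.
  rewrite [3 - 1 == 0]eq_sym [3 - 1 == 1]eq_sym.
  rewrite (@Zp_eqF 0 _ 2) ?(@Zp_eqF 1 _ 1) ?(@Zp_eqF _ 3 1) //; try lia; ring.
Qed.

End SmallResidues.

Section Reconstructive.
Variables (n d : nat) (gamma : 'rV['Z_n]_d -> rat).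
Hypotheses (n_prime : prime n) (n_gt5 : (5 < n)%N) (rec : reconstructive gamma).
Implicit Types (x y : 'rV['Z_n]_d).

Lemma reconstructive_dot_shift (g : 'Z_n -> bool) x y : x != 0 -> y != 0 ->
  dot_law gamma x =1 dot_law gamma y ->
  exists c, forall k, g (dotZ k x) = g (dotZ k y + c).
Proof.
move=> x_neq0 y_neq0 eq_law.
have [l shift] := rec (same_law_dot g n_prime x_neq0 y_neq0 eq_law).
by exists (dotZ l y) => k; rewrite shift dotZDl.
Qed.

Lemma same_dot_law_collinear x y : x != 0 -> y != 0 ->
  dot_law gamma x =1 dot_law gamma y -> exists a, y = a *: x.
Proof.
move=> x_neq0 y_neq0 eq_law; apply: (collinear_of_kernel n_prime x_neq0) => k.
have [c shift] := reconstructive_dot_shift (fun s => s == 0) x_neq0 y_neq0 eq_law.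
have c0 : c = 0 by have := shift 0; rewrite !dotZ0l add0r eqxx => /esym/eqP.
by move/eqP; rewrite shift c0 addr0 => /eqP.
Qed.

Lemma same_dot_law_scale x a : x != 0 -> a != 0 ->
  dot_law gamma x =1 dot_law gamma (a *: x) -> a = 1.
Proof.
move=> x_neq0 a_neq0 eq_law; have ax_neq0 : a *: x != 0.
  apply: contraNneq x_neq0 => ax0.
  by rewrite -[x]scale1r -(mulVr (Zp_unit n_prime a_neq0)) -scalerA ax0 scaler0.
have [e dot_e] := dual_vector n_prime x_neq0.
have affine_inv (g : 'Z_n -> bool) : exists c, forall s, g (a * s + c) = g s.
  have [c shift] := reconstructive_dot_shift g x_neq0 ax_neq0 eq_law.
  exists c => s; rewrite -[s in RHS]mulr1 -dot_e -dotZZl shift.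
  by rewrite dotZZr dotZZl dot_e mulr1.
(* {0, 1} is invariant under s |-> 1 - s, hence the second test set for a = -1. *)
have [a_N1|a_neqN1] := eqVneq a (-1).
  have [c inv] := affine_inv (@mem013 n); case: (reflection_mem013 n_gt5 (c := c)) => s.
  by rewrite -(inv s) a_N1 mulN1r addrC.
by have [c inv] := affine_inv (@mem01 _); apply: affine_mem01 inv.
Qed.

Lemma dot_law0_neq x : x != 0 -> ~ dot_law gamma 0 =1 dot_law gamma x.
Proof.
move=> x_neq0 eq_law; have two_neq0 : (2 : 'Z_n) != 0.
  rewrite eq_sym; apply/negbT/(@Zp_eqF n n_gt5 0 2 2); [lia | exact: subr0].
suff : (2 : 'Z_n) = 1 by move/eqP; rewrite -subr_eq0 [2]/(1 + 1) addrK oner_eq0.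
apply: same_dot_law_scale x_neq0 two_neq0 _ => s.
rewrite dot_lawZ; under eq_bigr do rewrite -eq_law.
by rewrite -dot_lawZ scaler0 eq_law.
Qed.

Lemma same_dot_law_eq x y : dot_law gamma x =1 dot_law gamma y -> x = y.
Proof.
move=> eq_law; have [x0|x_neq0] := eqVneq x 0; have [y0|y_neq0] := eqVneq y 0.
- by rewrite x0 y0.
- by case: (dot_law0_neq y_neq0) => s; rewrite -x0 eq_law.
- by case: (dot_law0_neq x_neq0) => s; rewrite -y0 eq_law.
have [a y_ax] := same_dot_law_collinear x_neq0 y_neq0 eq_law.
have a_neq0 : a != 0 by apply: contraNneq y_neq0 => a0; rewrite y_ax a0 scale0r.
by rewrite y_ax (same_dot_law_scale x_neq0 a_neq0) ?scale1r // -y_ax.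
Qed.

End Reconstructive.

Theorem theorem7 (R : realType) (n d : nat) (gamma : 'rV['Z_n]_d -> rat) :
  prime n -> (5 < n)%N -> (1 <= d)%N ->
  is_distribution gamma ->
  reconstructive gamma ->
  forall x y : 'rV['Z_n]_d, fourier R gamma x = fourier R gamma y -> x = y.
Proof.
move=> n_prime n_gt5 _ _ rec x y eq_fourier.
apply: (same_dot_law_eq n_prime n_gt5 rec).
exact: fourier_inj_dot_law n_prime (ltn_trans _ n_gt5) eq_fourier.
Qed.
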